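(* Let $\mathcal{G}$ be a finite-dimensional solvable Lie algebra and let $S$ be a finite abelian semigroup containing a zero element $0_S$. Then the $0_S$-reduced algebra $\mathcal{G}_S^{\mathrm{red}}$ obtained from the $S$-expanded algebra $\mathcal{G}_S=S\otimes\mathcal{G}$ is solvable.
   Context: For a Lie algebra $\mathcal{G}$ with basis $\{X_i\}$, $[X_i,X_j]=C_{ij}^kX_k$, and a finite abelian semigroup $S=\{\lambda_\alpha\}$ with 2-selector $K_{\alpha\beta}^\gamma$ ($=1$ if $\lambda_\alpha\lambda_\beta=\lambda_\gamma$, else $0$), the $S$-expanded algebra $\mathcal{G}_S=S\otimes\mathcal{G}$ has basis $X_{(i,\alpha)}=\lambda_\alpha\otimes X_i$ and bracket $[X_{(i,\alpha)},X_{(j,\beta)}]=K_{\alpha\beta}^\gamma C_{ij}^k X_{(k,\gamma)}$. A zero element is $0_S\in S$ with $0_S\lambda=0_S$ for all $\lambda\in S$. The $0_S$-reduced algebra $\mathcal{G}_S^{\mathrm{red}}$ is the Lie algebra spanned by $X_{(i,\alpha)}$ with $\lambda_\alpha\neq 0_S$, with bracket $[X_{(i,\alpha)},X_{(j,\beta)}]=\sum_{\gamma:\lambda_\gamma\neq0_S}K_{\alpha\beta}^\gamma C_{ij}^k X_{(k,\gamma)}$ (i.e. obtained by setting $0_S\otimes\mathcal{G}=0$). *)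

From HB Require Import structures.
From mathcomp Require Import all_boot all_order all_algebra.
Set Implicit Arguments. Unset Strict Implicit. Unset Printing Implicit Defensive.
Import GRing.Theory.
Local Open Scope ring_scope.

(* A finite-dimensional Lie algebra over a field K with basis indexed by a
   finite type I is given by its structure constants C i j k:
   [X_i, X_j] = \sum_k C i j k X_k.  Vectors are {ffun I -> K}. *)

Definition bracket (K : fieldType) (I : finType) (C : I -> I -> I -> K)
  (x y : {ffun I -> K}) : {ffun I -> K} :=
  [ffun k => \sum_i \sum_j x i * y j * C i j k].

Definition is_lie_algebra (K : fieldType) (I : finType) (C : I -> I -> I -> K) :=
  (forall i j k, C i j k = - C j i k) /\
  (forall i k, C i i k = 0) /\
  (forall i j k m,
     \sum_l (C i j l * C l k m + C j k l * C l i m + C k i l * C l j m) = 0).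

Inductive span (K : fieldType) (I : finType) (P : {ffun I -> K} -> Prop)
  : {ffun I -> K} -> Prop :=
| span_gen x : P x -> span P x
| span_0 : span P [ffun => 0]
| span_add x y : span P x -> span P y -> span P [ffun i => x i + y i]
| span_scale (a : K) x : span P x -> span P [ffun i => a * x i].

Fixpoint derived (K : fieldType) (I : finType) (C : I -> I -> I -> K) (n : nat)
  : {ffun I -> K} -> Prop :=
  match n with
  | 0 => fun _ => True
  | n'.+1 => span (fun z => exists x y, derived C n' x /\ derived C n' y /\
                                        z = bracket C x y)
  end.

Definition solvable_lie (K : fieldType) (I : finType) (C : I -> I -> I -> K) :=
  exists n, forall x, derived C n x -> forall i, x i = 0.

Definition abelian_semigroup (S : finType) (mul : S -> S -> S) :=
  associative mul /\ commutative mul.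

Definition is_zero_elem (S : finType) (mul : S -> S -> S) (z : S) :=
  forall s, mul z s = z.

Definition red_index (S : finType) (z : S) (I : finType) : finType :=
  ({s : S | s != z} * I)%type.

(* Structure constants of the 0_S-reduced algebra:
   [X_(i,a), X_(j,b)] = sum_{c <> 0_S} K_{ab}^c C_ij^k X_(k,c). *)
Definition red_constants (K : fieldType) (S : finType) (mul : S -> S -> S)
  (z : S) (I : finType) (C : I -> I -> I -> K)
  (p q r : red_index z I) : K :=
  if mul (val p.1) (val q.1) == val r.1 then C p.2 q.2 r.2 else 0.

(** Slicing an element of the reduced algebra at a nonzero semigroup index
    gives a vector of [G], and the slice of a bracket is a sum of brackets of
    slices.  So slicing maps the n-th derived term of the reduced algebra into
    the n-th derived term of [G], and the former vanishes when the latter does. *)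
From Pilot Require Import Defs.
From mathcomp Require Import all_boot all_order all_algebra.
Set Implicit Arguments. Unset Strict Implicit.
Import GRing.Theory.
Local Open Scope ring_scope.

(* [Defs.span] is qualified because MathComp's [vector.span] shadows it. *)
Section Span.
Variable K : fieldType.

Lemma span0 (I : finType) (P : {ffun I -> K} -> Prop) : Defs.span P 0.
Proof.
have -> : (0 : {ffun I -> K}) = [ffun => 0] by apply/ffunP=> i; rewrite !ffunE.
exact: span_0.
Qed.

Lemma spanD (I : finType) (P : {ffun I -> K} -> Prop) x y :
  Defs.span P x -> Defs.span P y -> Defs.span P (x + y).
Proof.
have -> : x + y = [ffun i => x i + y i] by apply/ffunP=> i; rewrite !ffunE.
exact: span_add.
Qed.

Lemma span_linear_image (I J : finType)
    (P : {ffun I -> K} -> Prop) (Q : {ffun J -> K} -> Prop)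
    (f : {ffun I -> K} -> {ffun J -> K}) :
  (forall x y, f (x + y) = f x + f y) ->
  (forall a (x : {ffun I -> K}), f [ffun i => a * x i] = [ffun j => a * f x j]) ->
  (forall x, P x -> Defs.span Q (f x)) ->
  forall x, Defs.span P x -> Defs.span Q (f x).
Proof.
move=> fD fZ fP x; elim=> {x} [x /fP //| | x y _ Hx _ Hy | a x _ Hx].
- have -> : [ffun => 0] = [ffun i => 0 * (0 : {ffun I -> K}) i]
    by apply/ffunP=> i; rewrite !ffunE mul0r.
  rewrite fZ; have -> : [ffun j => 0 * f 0 j] = [ffun => 0]
    by apply/ffunP=> j; rewrite !ffunE mul0r.
  exact: span_0.
- have -> : [ffun i => x i + y i] = x + y by apply/ffunP=> i; rewrite !ffunE.
  by rewrite fD; exact: spanD.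
- by rewrite fZ; exact: span_scale.
Qed.

Lemma derived_sum (I : finType) (C : I -> I -> I -> K)
    (T : finType) (R : pred T) n (F : T -> {ffun I -> K}) :
  (forall t, R t -> derived C n (F t)) -> derived C n (\sum_(t | R t) F t).
Proof.
case: n F => [//|n] F HF /=.
by apply: (big_ind (Defs.span _)); [exact: span0 | exact: spanD | exact: HF].
Qed.

End Span.

Section Reduced.
Variables (K : fieldType) (I : finType) (C : I -> I -> I -> K)
  (S : finType) (mul : S -> S -> S) (z : S).
Notation RI := (red_index z I).
Notation RC := (@red_constants K S mul z I C).

Definition red_slice (a : {s : S | s != z}) (x : {ffun RI -> K}) : {ffun I -> K} :=
  [ffun i => x (a, i)].

Lemma red_sliceD a x y : red_slice a (x + y) = red_slice a x + red_slice a y.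
Proof. by apply/ffunP=> i; rewrite !ffunE. Qed.

Lemma red_sliceZ a c (x : {ffun RI -> K}) :
  red_slice a [ffun p => c * x p] = [ffun i => c * red_slice a x i].
Proof. by apply/ffunP=> i; rewrite !ffunE. Qed.

Lemma big_red_index (F : RI -> K) : \sum_p F p = \sum_a \sum_i F (a, i).
Proof. by rewrite pair_big; apply: eq_bigr => -[]. Qed.

Lemma red_slice_bracket x y c :
  red_slice c (bracket RC x y) =
  \sum_a \sum_b (if mul (val a) (val b) == val c
                 then bracket C (red_slice a x) (red_slice b y) else 0).
Proof.
apply/ffunP=> k; rewrite !ffunE !sum_ffunE big_red_index; apply: eq_bigr => a _.
rewrite sum_ffunE.
under eq_bigr => i _ do rewrite big_red_index.
rewrite exchange_big; apply: eq_bigr => b _; rewrite /red_constants /=.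
case: ifP => _; rewrite ffunE.
- by apply: eq_bigr => i _; apply: eq_bigr => j _; rewrite !ffunE.
- by rewrite big1 // => i _; rewrite big1 // => j _; rewrite mulr0.
Qed.

Lemma red_slice_derived n a x : derived RC n x -> derived C n (red_slice a x).
Proof.
elim: n a x => [//|n IH] a x /=.
apply: span_linear_image x; [exact: red_sliceD | exact: red_sliceZ |].
move=> _ [x [y [Hx [Hy ->]]]]; rewrite red_slice_bracket.
apply: (derived_sum (n := n.+1)) => b _; apply: (derived_sum (n := n.+1)) => c _.
case: ifP => _; last exact: span0.
apply: span_gen; exists (red_slice b x), (red_slice c y).
by split; [exact: IH | split; [exact: IH | by []]].
Qed.

End Reduced.

Theorem theorem3 (K : fieldType) (I : finType) (C : I -> I -> I -> K)
  (S : finType) (mul : S -> S -> S) (z : S) :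
  is_lie_algebra C -> solvable_lie C ->
  abelian_semigroup mul -> is_zero_elem mul z ->
  solvable_lie (@red_constants K S mul z I C).
Proof.
move=> _ [n Hn] _ _; exists n => x Hx [a i].
by have := Hn _ (red_slice_derived a Hx) i; rewrite ffunE.
Qed.
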